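(* In the setting below, let $D$ be a down-square ($j\colon X\to Y$, $q\colon X\to Z$, $i\colon Z\to W$, $p\colon Y\to W$, $\alpha\colon pj\Rightarrow iq$) such that $i,j$ are morphisms of $\mathcal A\cap\mathcal B$, $\epsilon^{\mathcal B}_i$ and $\epsilon^{\mathcal B}_j$ are invertible, and $\alpha$ is invertible. Let $D'$ be the down-square with edges $q\colon X\to Z$ (top), $j\colon X\to Y$ (left), $p\colon Y\to W$ (bottom), $i\colon Z\to W$ (right) and $2$-cell $\alpha^{-1}\colon iq\Rightarrow pj$. Then the composite $j_!q^*\xRightarrow{A_D}p^*i_!\xRightarrow{\rho_i}p^*i_*\xRightarrow{B_{D'}}j_*q^*$ equals $j_!q^*\xRightarrow{\rho_j}j_*q^*$.
   Context: Setting. $\mathcal C,\mathcal D$ are $2$-categories; $\mathcal A,\mathcal B$ are $2$-subcategories of $\mathcal C$ (hom-inclusions fully faithful and injective on objects). Given: a pseudofunctor $\mathcal C\to\mathcal D^{\mathrm{coop}}$, $X\mapsto X$, $f\mapsto f^*$ ($f\colon X\to Y$ gives $f^*\colon Y\to X$), $(\alpha\colon f\Rightarrow g)\mapsto\alpha^*\colon g^*\Rightarrow f^*$, coherence $(gf)^*\cong f^*g^*$; pseudofunctors $\mathcal B\to\mathcal D$, $p\mapsto p_*$, and $\mathcal A\to\mathcal D$, $i\mapsto i_!$; adjunctions $p^*\dashv p_*$ (unit $\eta_p\colon1\Rightarrow p_*p^*$, counit $\epsilon_p\colon p^*p_*\Rightarrow1$) for $p\in\mathcal B$ and $i_!\dashv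 i^*$ (unit $\eta_i\colon1\Rightarrow i^*i_!$, counit $\epsilon_i\colon i_!i^*\Rightarrow1$) for $i\in\mathcal A$, compatible with the pseudofunctor structures (units/counits of composites correspond under coherence isomorphisms to composites; $2$-cells act by mates). For $f\in\mathcal A\cap\mathcal B$ write $\eta^{\mathcal B}_f,\epsilon^{\mathcal B}_f$ for the unit/counit of $f^*\dashv f_*$ and $\eta^{\mathcal A}_f,\epsilon^{\mathcal A}_f$ for those of $f_!\dashv f^*$. $\cong$ denotes coherence isomorphisms. A down-square $D$: $j\colon X\to Y$, $q\colon X\to Z$, $i\colon Z\to W$, $p\colon Y\to W$, $\alpha\colon pj\Rightarrow iq$. If $p,q\in\mathcal B$: $B_D\colon i^*p_*\Rightarrow q_*j^*$ is $i^*p_*\xRightarrow{\eta_q}q_*q^*i^*p_*\cong q_*(iq)^*p_*\xRightarrow{\alpha^*}q_*(pj)^*p_*\cong q_*j^*p^*p_*\xRightarrow{\epsilon_p}q_*j^*$. If $i,j\in\mathcal A$: $A_D\colon j_!q^*\Rightarrow p^*i_!$ is $j_!q^*\xRightarrow{\eta_i}j_!q^*i^*i_!\cong j_!(iq)^*i_!\xRightarrow{\alpha^*}j_!(pj)^*i_!\cong j_!j^*p^*i_!\xRightarrow{\epsilon_j}p^*i_!$. For $f\in\mathcal A\cap\mathcal B$ with $\epsilon^{\mathcal B}_f$ invertible (equivalently $\eta^{\mathcal A}_f$ invertible), $\rho_f\colon f_!\Rightarrow f_*$ is $f_!\xRightarrow{\eta^{\mathcal B}_f}f_*f^*f_!\xRightarrow{(\eta^{\mathcal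 A}_f)^{-1}}f_*$. *)

Set Implicit Arguments.

Record BicatData := {
  ob : Type;
  hom : ob -> ob -> Type;
  cell : forall a b, hom a b -> hom a b -> Type;
  id1 : forall a, hom a a;
  comp1 : forall a b c, hom b c -> hom a b -> hom a c;   (* comp1 g f = g o f *)
  id2 : forall a b (f : hom a b), cell f f;
  vcomp : forall a b (f g h : hom a b), cell g h -> cell f g -> cell f h;
  hcomp : forall a b c (g g' : hom b c) (f f' : hom a b),
      cell g g' -> cell f f' -> cell (comp1 g f) (comp1 g' f');
  assoc : forall a b c d (h : hom c d) (g : hom b c) (f : hom a b),
      cell (comp1 h (comp1 g f)) (comp1 (comp1 h g) f);
  assoc_inv : forall a b c d (h : hom c d) (g : hom b c) (f : hom a b),
      cell (comp1 (comp1 h g) f) (comp1 h (comp1 g f));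
  lunit : forall a b (f : hom a b), cell (comp1 (id1 b) f) f;
  lunit_inv : forall a b (f : hom a b), cell f (comp1 (id1 b) f);
  runit : forall a b (f : hom a b), cell (comp1 f (id1 a)) f;
  runit_inv : forall a b (f : hom a b), cell f (comp1 f (id1 a))
}.

Arguments hom {b0} _ _.
Arguments cell {b0 a b} _ _.
Arguments id1 {b0} a.
Arguments comp1 {b0 a b c} _ _.
Arguments id2 {b0 a b} f.
Arguments vcomp {b0 a b f g h} _ _.
Arguments hcomp {b0 a b c g g' f f'} _ _.
Arguments assoc {b0 a b c d} h g f.
Arguments assoc_inv {b0 a b c d} h g f.
Arguments lunit {b0 a b} f.
Arguments lunit_inv {b0 a b} f.
Arguments runit {b0 a b} f.
Arguments runit_inv {b0 a b} f.

(* diagrammatic vertical composition: first [x], then [y] *)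
Notation "x >>> y" := (vcomp y x) (at level 50, left associativity).

Record BicatLaws (B : BicatData) : Prop := {
  vid_l : forall (a b : ob B) (f g : hom a b) (x : cell f g), vcomp (id2 g) x = x;
  vid_r : forall (a b : ob B) (f g : hom a b) (x : cell f g), vcomp x (id2 f) = x;
  vassoc : forall (a b : ob B) (f g h k : hom a b) (x : cell f g) (y : cell g h) (z : cell h k),
      vcomp z (vcomp y x) = vcomp (vcomp z y) x;
  hcomp_id : forall (a b c : ob B) (g : hom b c) (f : hom a b),
      hcomp (id2 g) (id2 f) = id2 (comp1 g f);
  interchange : forall (a b c : ob B) (g g' g'' : hom b c) (f f' f'' : hom a b)
      (y : cell g g') (y' : cell g' g'') (x : cell f f') (x' : cell f' f''),
      hcomp (vcomp y' y) (vcomp x' x) = vcomp (hcomp y' x') (hcomp y x);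
  assoc_nat : forall (a b c d : ob B) (h h' : hom c d) (g g' : hom b c) (f f' : hom a b)
      (z : cell h h') (y : cell g g') (x : cell f f'),
      vcomp (assoc h' g' f') (hcomp z (hcomp y x))
      = vcomp (hcomp (hcomp z y) x) (assoc h g f);
  assoc_iso1 : forall (a b c d : ob B) (h : hom c d) (g : hom b c) (f : hom a b),
      vcomp (assoc_inv h g f) (assoc h g f) = id2 _;
  assoc_iso2 : forall (a b c d : ob B) (h : hom c d) (g : hom b c) (f : hom a b),
      vcomp (assoc h g f) (assoc_inv h g f) = id2 _;
  lunit_nat : forall (a b : ob B) (f f' : hom a b) (x : cell f f'),
      vcomp (lunit f') (hcomp (id2 (id1 b)) x) = vcomp x (lunit f);
  runit_nat : forall (a b : ob B) (f f' : hom a b) (x : cell f f'),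
      vcomp (runit f') (hcomp x (id2 (id1 a))) = vcomp x (runit f);
  lunit_iso1 : forall (a b : ob B) (f : hom a b), vcomp (lunit_inv f) (lunit f) = id2 _;
  lunit_iso2 : forall (a b : ob B) (f : hom a b), vcomp (lunit f) (lunit_inv f) = id2 _;
  runit_iso1 : forall (a b : ob B) (f : hom a b), vcomp (runit_inv f) (runit f) = id2 _;
  runit_iso2 : forall (a b : ob B) (f : hom a b), vcomp (runit f) (runit_inv f) = id2 _;
  pentagon : forall (a b c d e : ob B) (k : hom d e) (h : hom c d) (g : hom b c) (f : hom a b),
      vcomp (assoc (comp1 k h) g f) (assoc k h (comp1 g f))
      = vcomp (hcomp (assoc k h g) (id2 f))
          (vcomp (assoc k (comp1 h g) f) (hcomp (id2 k) (assoc h g f)));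
  triangle : forall (a b c : ob B) (g : hom b c) (f : hom a b),
      vcomp (hcomp (runit g) (id2 f)) (assoc g (id1 b) f) = hcomp (id2 g) (lunit f)
}.

Record Bicat := { bdata :> BicatData; blaws : BicatLaws bdata }.

Definition IsStrict (B : BicatData) : Prop :=
  (forall (a b c d : ob B) (h : hom c d) (g : hom b c) (f : hom a b),
      exists e : comp1 h (comp1 g f) = comp1 (comp1 h g) f,
        assoc h g f = eq_rect _ (fun k => cell (comp1 h (comp1 g f)) k)
                              (id2 (comp1 h (comp1 g f))) _ e) /\
  (forall (a b : ob B) (f : hom a b),
      exists e : comp1 (id1 b) f = f,
        lunit f = eq_rect _ (fun k => cell (comp1 (id1 b) f) k)
                          (id2 (comp1 (id1 b) f)) _ e) /\
  (forall (a b : ob B) (f : hom a b),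
      exists e : comp1 f (id1 a) = f,
        runit f = eq_rect _ (fun k => cell (comp1 f (id1 a)) k)
                          (id2 (comp1 f (id1 a))) _ e).

Definition IsInverse {B : BicatData} {a b : ob B} {f g : hom a b}
  (x : cell f g) (y : cell g f) : Prop :=
  vcomp y x = id2 f /\ vcomp x y = id2 g.

Definition IsIso {B : BicatData} {a b : ob B} {f g : hom a b} (x : cell f g) : Prop :=
  exists y : cell g f, IsInverse x y.

Definition IsAdj {B : BicatData} {a b : ob B} (L : hom a b) (R : hom b a)
  (eta : cell (id1 a) (comp1 R L)) (eps : cell (comp1 L R) (id1 b)) : Prop :=
  runit_inv L >>> hcomp (id2 L) eta >>> assoc L R L >>> hcomp eps (id2 L) >>> lunit L
    = id2 L /\
  lunit_inv R >>> hcomp eta (id2 R) >>> assoc_inv R L R >>> hcomp (id2 R) eps >>> runit R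
    = id2 R.

Definition adj_comp_unit {B : BicatData} {x y z : ob B} (L1 : hom x y) (R1 : hom y x)
  (L2 : hom y z) (R2 : hom z y)
  (eta1 : cell (id1 x) (comp1 R1 L1)) (eta2 : cell (id1 y) (comp1 R2 L2))
  : cell (id1 x) (comp1 (comp1 R1 R2) (comp1 L2 L1)) :=
  eta1 >>> hcomp (runit_inv R1) (id2 L1) >>> hcomp (hcomp (id2 R1) eta2) (id2 L1)
       >>> hcomp (assoc R1 R2 L2) (id2 L1) >>> assoc_inv (comp1 R1 R2) L2 L1.

Definition adj_comp_counit {B : BicatData} {x y z : ob B} (L1 : hom x y) (R1 : hom y x)
  (L2 : hom y z) (R2 : hom z y)
  (eps1 : cell (comp1 L1 R1) (id1 y)) (eps2 : cell (comp1 L2 R2) (id1 z))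
  : cell (comp1 (comp1 L2 L1) (comp1 R1 R2)) (id1 z) :=
  assoc_inv L2 L1 (comp1 R1 R2) >>> hcomp (id2 L2) (assoc L1 R1 R2)
    >>> hcomp (id2 L2) (hcomp eps1 (id2 R2)) >>> hcomp (id2 L2) (lunit R2) >>> eps2.

Definition right_mate {B : BicatData} {a b : ob B} (L L' : hom b a) (R R' : hom a b)
  (eta' : cell (id1 b) (comp1 R' L')) (eps : cell (comp1 L R) (id1 a))
  (s : cell L' L) : cell R R' :=
  lunit_inv R >>> hcomp eta' (id2 R) >>> assoc_inv R' L' R
    >>> hcomp (id2 R') (hcomp s (id2 R)) >>> hcomp (id2 R') eps >>> runit R'.

Definition left_mate {B : BicatData} {a b : ob B} (L L' : hom a b) (R R' : hom b a)
  (eta' : cell (id1 a) (comp1 R' L')) (eps : cell (comp1 L R) (id1 b))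
  (s : cell R' R) : cell L L' :=
  runit_inv L >>> hcomp (id2 L) eta' >>> hcomp (id2 L) (hcomp s (id2 L'))
    >>> assoc L R L' >>> hcomp eps (id2 L') >>> lunit L'.

Record Sub2 (C : BicatData) := {
  sob : ob C -> Prop;
  smor : forall a b, @hom C a b -> Prop;
  smor_src : forall (a b : ob C) (f : hom a b), smor a b f -> sob a;
  smor_tgt : forall (a b : ob C) (f : hom a b), smor a b f -> sob b;
  sid : forall (a : ob C), sob a -> smor a a (id1 a);
  scomp : forall (a b c : ob C) (f : hom a b) (g : hom b c), smor a b f -> smor b c g -> smor a c (comp1 g f)
}.
Arguments sob {C} _ _.
Arguments smor {C} _ {a b} f.
Arguments smor_src {C s a b f} _.
Arguments smor_tgt {C s a b f} _.
Arguments sid {C s a} _.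
Arguments scomp {C s a b c f g} _ _.

Record CoopPsfunData (C D : BicatData) := {
  F0 : ob C -> ob D;
  star : forall a b, @hom C a b -> hom (F0 b) (F0 a);
  star2 : forall (a b : ob C) (f g : hom a b), cell f g -> cell (star a b g) (star a b f);
  scmp : forall (a b c : ob C) (f : hom a b) (g : hom b c),
      cell (comp1 (star a b f) (star b c g)) (star a c (comp1 g f));
  scmp_inv : forall (a b c : ob C) (f : hom a b) (g : hom b c),
      cell (star a c (comp1 g f)) (comp1 (star a b f) (star b c g));
  sunit : forall (a : ob C), cell (id1 (F0 a)) (star a a (id1 a));
  sunit_inv : forall (a : ob C), cell (star a a (id1 a)) (id1 (F0 a))
}.
Arguments F0 {C D} _ a.
Arguments star {C D} _ {a b} _.
Arguments star2 {C D} _ {a b f g} _.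
Arguments scmp {C D} _ {a b c} f g.
Arguments scmp_inv {C D} _ {a b c} f g.
Arguments sunit {C D} _ a.
Arguments sunit_inv {C D} _ a.

Record CoopPsfunLaws {C D : BicatData} (P : CoopPsfunData C D) : Prop := {
  star2_id : forall (a b : ob C) (f : @hom C a b), star2 P (id2 f) = id2 (star P f);
  star2_comp : forall (a b : ob C) (f g h : @hom C a b) (x : cell f g) (y : cell g h),
      star2 P (vcomp y x) = vcomp (star2 P x) (star2 P y);
  scmp_iso : forall (a b c : ob C) (f : @hom C a b) (g : hom b c),
      IsInverse (scmp P f g) (scmp_inv P f g);
  scmp_nat : forall (a b c : ob C) (f f' : @hom C a b) (g g' : hom b c) (x : cell f f') (y : cell g g'),
      vcomp (scmp P f g) (hcomp (star2 P x) (star2 P y))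
      = vcomp (star2 P (hcomp y x)) (scmp P f' g');
  sunit_iso : forall (a : ob C), IsInverse (sunit P a) (sunit_inv P a);
  scmp_assoc : forall (a b c d : ob C) (f : @hom C a b) (g : hom b c) (h : hom c d),
      vcomp (scmp P f (comp1 h g)) (hcomp (id2 (star P f)) (scmp P g h))
      = vcomp (star2 P (assoc_inv h g f))
          (vcomp (scmp P (comp1 g f) h)
             (vcomp (hcomp (scmp P f g) (id2 (star P h)))
                (assoc (star P f) (star P g) (star P h))));
  scmp_lunit : forall (a b : ob C) (f : @hom C a b),
      lunit_inv (star P f) >>> hcomp (sunit P a) (id2 (star P f))
        >>> scmp P (id1 a) f >>> star2 P (runit_inv f) = id2 (star P f);
  scmp_runit : forall (a b : ob C) (f : @hom C a b),
      runit_inv (star P f) >>> hcomp (id2 (star P f)) (sunit P b)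
        >>> scmp P f (id1 b) >>> star2 P (lunit_inv f) = id2 (star P f)
}.

Record CoopPsfun (C D : BicatData) :=
  { cpdata :> CoopPsfunData C D; cplaws : CoopPsfunLaws cpdata }.

Record SubPsfunData (C D : BicatData) (S : Sub2 C) (G0 : ob C -> ob D) := {
  fmap : forall (a b : ob C) (f : @hom C a b), smor S f -> hom (G0 a) (G0 b);
  fmap2 : forall (a b : ob C) (f g : @hom C a b) (pf : smor S f) (pg : smor S g),
      cell f g -> cell (fmap a b f pf) (fmap a b g pg);
  pcmp : forall (a b c : ob C) (f : @hom C a b) (g : hom b c) (pf : smor S f) (pg : smor S g),
      cell (comp1 (fmap b c g pg) (fmap a b f pf)) (fmap a c (comp1 g f) (scomp pf pg));
  pcmp_inv : forall (a b c : ob C) (f : @hom C a b) (g : hom b c) (pf : smor S f) (pg : smor S g),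
      cell (fmap a c (comp1 g f) (scomp pf pg)) (comp1 (fmap b c g pg) (fmap a b f pf));
  punit : forall (a : ob C) (ha : sob S a), cell (id1 (G0 a)) (fmap a a (id1 a) (sid ha));
  punit_inv : forall (a : ob C) (ha : sob S a), cell (fmap a a (id1 a) (sid ha)) (id1 (G0 a))
}.
Arguments fmap {C D S G0} _ {a b f} _.
Arguments fmap2 {C D S G0} _ {a b f g} pf pg _.
Arguments pcmp {C D S G0} _ {a b c f g} pf pg.
Arguments pcmp_inv {C D S G0} _ {a b c f g} pf pg.
Arguments punit {C D S G0} _ {a} ha.
Arguments punit_inv {C D S G0} _ {a} ha.

Record SubPsfunLaws {C D : BicatData} {S : Sub2 C} {G0 : ob C -> ob D}
  (P : SubPsfunData D S G0) : Prop := {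
  fmap2_id : forall (a b : ob C) (f : @hom C a b) (pf : smor S f),
      fmap2 P pf pf (id2 f) = id2 (fmap P pf);
  fmap2_comp : forall (a b : ob C) (f g h : @hom C a b) (pf : smor S f) (pg : smor S g)
      (ph : smor S h) (x : cell f g) (y : cell g h),
      fmap2 P pf ph (vcomp y x) = vcomp (fmap2 P pg ph y) (fmap2 P pf pg x);
  pcmp_iso : forall (a b c : ob C) (f : @hom C a b) (g : hom b c) (pf : smor S f) (pg : smor S g),
      IsInverse (pcmp P pf pg) (pcmp_inv P pf pg);
  pcmp_nat : forall (a b c : ob C) (f f' : @hom C a b) (g g' : hom b c)
      (pf : smor S f) (pf' : smor S f') (pg : smor S g) (pg' : smor S g')
      (x : cell f f') (y : cell g g'),
      vcomp (pcmp P pf' pg') (hcomp (fmap2 P pg pg' y) (fmap2 P pf pf' x))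
      = vcomp (fmap2 P (scomp pf pg) (scomp pf' pg') (hcomp y x)) (pcmp P pf pg);
  punit_iso : forall (a : ob C) (ha : sob S a), IsInverse (punit P ha) (punit_inv P ha);
  pcmp_assoc : forall (a b c d : ob C) (f : @hom C a b) (g : hom b c) (h : hom c d)
      (pf : smor S f) (pg : smor S g) (ph : smor S h),
      vcomp (pcmp P pf (scomp pg ph)) (hcomp (pcmp P pg ph) (id2 (fmap P pf)))
      = vcomp (fmap2 P (scomp (scomp pf pg) ph) (scomp pf (scomp pg ph)) (assoc h g f))
          (vcomp (pcmp P (scomp pf pg) ph)
             (vcomp (hcomp (id2 (fmap P ph)) (pcmp P pf pg))
                (assoc_inv (fmap P ph) (fmap P pg) (fmap P pf))));
  pcmp_lunit : forall (a b : ob C) (f : @hom C a b) (pf : smor S f),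
      lunit_inv (fmap P pf) >>> hcomp (punit P (smor_tgt pf)) (id2 (fmap P pf))
        >>> pcmp P pf (sid (smor_tgt pf))
        >>> fmap2 P (scomp pf (sid (smor_tgt pf))) pf (lunit f) = id2 (fmap P pf);
  pcmp_runit : forall (a b : ob C) (f : @hom C a b) (pf : smor S f),
      runit_inv (fmap P pf) >>> hcomp (id2 (fmap P pf)) (punit P (smor_src pf))
        >>> pcmp P (sid (smor_src pf)) pf
        >>> fmap2 P (scomp (sid (smor_src pf)) pf) pf (runit f) = id2 (fmap P pf)
}.

Record SubPsfun (C D : BicatData) (S : Sub2 C) (G0 : ob C -> ob D) :=
  { spdata :> SubPsfunData D S G0; splaws : SubPsfunLaws spdata }.

Record SettingData (C D : BicatData) := {
  SA : Sub2 C;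
  SB : Sub2 C;
  st : CoopPsfun C D;                               (* f |-> f^*   *)
  shr : SubPsfun D SA (F0 st);                      (* i |-> i_!   *)
  psh : SubPsfun D SB (F0 st);                      (* p |-> p_*   *)
  etaA : forall (a b : ob C) (f : @hom C a b) (pf : smor SA f),
      cell (id1 (F0 st a)) (comp1 (star st f) (fmap shr pf));
  epsA : forall (a b : ob C) (f : @hom C a b) (pf : smor SA f),
      cell (comp1 (fmap shr pf) (star st f)) (id1 (F0 st b));
  etaB : forall (a b : ob C) (f : @hom C a b) (pf : smor SB f),
      cell (id1 (F0 st b)) (comp1 (fmap psh pf) (star st f));
  epsB : forall (a b : ob C) (f : @hom C a b) (pf : smor SB f),
      cell (comp1 (star st f) (fmap psh pf)) (id1 (F0 st a))
}.
Arguments SA {C D} _.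
Arguments SB {C D} _.
Arguments st {C D} _.
Arguments shr {C D} _.
Arguments psh {C D} _.
Arguments etaA {C D} _ {a b f} pf.
Arguments epsA {C D} _ {a b f} pf.
Arguments etaB {C D} _ {a b f} pf.
Arguments epsB {C D} _ {a b f} pf.

Record SettingLaws {C D : BicatData} (s : SettingData C D) : Prop := {
  adjA : forall (a b : ob C) (f : @hom C a b) (pf : smor (SA s) f),
      IsAdj (fmap (shr s) pf) (star (st s) f) (etaA s pf) (epsA s pf);
  adjB : forall (a b : ob C) (f : @hom C a b) (pf : smor (SB s) f),
      IsAdj (star (st s) f) (fmap (psh s) pf) (etaB s pf) (epsB s pf);
  mateA : forall (a b : ob C) (f g : @hom C a b) (pf : smor (SA s) f) (pg : smor (SA s) g)
      (x : cell f g),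
      fmap2 (shr s) pf pg x
      = left_mate (fmap (shr s) pf) (fmap (shr s) pg) (star (st s) f) (star (st s) g)
          (etaA s pg) (epsA s pf) (star2 (st s) x);
  mateB : forall (a b : ob C) (f g : @hom C a b) (pf : smor (SB s) f) (pg : smor (SB s) g)
      (x : cell f g),
      fmap2 (psh s) pf pg x
      = right_mate (star (st s) f) (star (st s) g) (fmap (psh s) pf) (fmap (psh s) pg)
          (etaB s pg) (epsB s pf) (star2 (st s) x);
  compA_unit : forall (a b c : ob C) (f : @hom C a b) (g : hom b c)
      (pf : smor (SA s) f) (pg : smor (SA s) g),
      etaA s (scomp pf pg)
      = adj_comp_unit (fmap (shr s) pf) (star (st s) f) (fmap (shr s) pg) (star (st s) g)
          (etaA s pf) (etaA s pg)
        >>> hcomp (scmp (st s) f g) (pcmp (shr s) pf pg);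
  compA_counit : forall (a b c : ob C) (f : @hom C a b) (g : hom b c)
      (pf : smor (SA s) f) (pg : smor (SA s) g),
      hcomp (pcmp (shr s) pf pg) (scmp (st s) f g) >>> epsA s (scomp pf pg)
      = adj_comp_counit (fmap (shr s) pf) (star (st s) f) (fmap (shr s) pg) (star (st s) g)
          (epsA s pf) (epsA s pg);
  compB_unit : forall (a b c : ob C) (f : @hom C a b) (g : hom b c)
      (pf : smor (SB s) f) (pg : smor (SB s) g),
      etaB s (scomp pf pg)
      = adj_comp_unit (star (st s) g) (fmap (psh s) pg) (star (st s) f) (fmap (psh s) pf)
          (etaB s pg) (etaB s pf)
        >>> hcomp (pcmp (psh s) pf pg) (scmp (st s) f g);
  compB_counit : forall (a b c : ob C) (f : @hom C a b) (g : hom b c)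
      (pf : smor (SB s) f) (pg : smor (SB s) g),
      hcomp (scmp (st s) f g) (pcmp (psh s) pf pg) >>> epsB s (scomp pf pg)
      = adj_comp_counit (star (st s) g) (fmap (psh s) pg) (star (st s) f) (fmap (psh s) pf)
          (epsB s pg) (epsB s pf);
  idA_unit : forall (a : ob C) (ha : sob (SA s) a),
      etaA s (sid ha) = lunit_inv (id1 (F0 (st s) a)) >>> hcomp (sunit (st s) a) (punit (shr s) ha);
  idA_counit : forall (a : ob C) (ha : sob (SA s) a),
      hcomp (punit (shr s) ha) (sunit (st s) a) >>> epsA s (sid ha) = lunit (id1 (F0 (st s) a));
  idB_unit : forall (a : ob C) (ha : sob (SB s) a),
      etaB s (sid ha) = lunit_inv (id1 (F0 (st s) a)) >>> hcomp (punit (psh s) ha) (sunit (st s) a);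
  idB_counit : forall (a : ob C) (ha : sob (SB s) a),
      hcomp (sunit (st s) a) (punit (psh s) ha) >>> epsB s (sid ha) = lunit (id1 (F0 (st s) a))
}.

Record Setting (C D : BicatData) :=
  { sdata :> SettingData C D; slaws : SettingLaws sdata }.

Definition B_D {C D : BicatData} (s : SettingData C D) {X Y Z W : ob C}
  (j : hom X Y) (q : hom X Z) (i : hom Z W) (p : hom Y W)
  (al : cell (comp1 p j) (comp1 i q)) (pp : smor (SB s) p) (pq : smor (SB s) q)
  : cell (comp1 (star (st s) i) (fmap (psh s) pp)) (comp1 (fmap (psh s) pq) (star (st s) j)) :=
  let ps := fmap (psh s) pp in
  let qs := fmap (psh s) pq in
  lunit_inv (comp1 (star (st s) i) ps)
  >>> hcomp (etaB s pq) (id2 (comp1 (star (st s) i) ps))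
  >>> assoc_inv qs (star (st s) q) (comp1 (star (st s) i) ps)
  >>> hcomp (id2 qs) (assoc (star (st s) q) (star (st s) i) ps)
  >>> hcomp (id2 qs) (hcomp (scmp (st s) q i) (id2 ps))
  >>> hcomp (id2 qs) (hcomp (star2 (st s) al) (id2 ps))
  >>> hcomp (id2 qs) (hcomp (scmp_inv (st s) j p) (id2 ps))
  >>> hcomp (id2 qs) (assoc_inv (star (st s) j) (star (st s) p) ps)
  >>> hcomp (id2 qs) (hcomp (id2 (star (st s) j)) (epsB s pp))
  >>> hcomp (id2 qs) (runit (star (st s) j)).

Definition A_D {C D : BicatData} (s : SettingData C D) {X Y Z W : ob C}
  (j : hom X Y) (q : hom X Z) (i : hom Z W) (p : hom Y W)
  (al : cell (comp1 p j) (comp1 i q)) (pi : smor (SA s) i) (pj : smor (SA s) j)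
  : cell (comp1 (fmap (shr s) pj) (star (st s) q)) (comp1 (star (st s) p) (fmap (shr s) pi)) :=
  let is_ := fmap (shr s) pi in
  let js := fmap (shr s) pj in
  runit_inv (comp1 js (star (st s) q))
  >>> hcomp (id2 (comp1 js (star (st s) q))) (etaA s pi)
  >>> assoc_inv js (star (st s) q) (comp1 (star (st s) i) is_)
  >>> hcomp (id2 js) (assoc (star (st s) q) (star (st s) i) is_)
  >>> hcomp (id2 js) (hcomp (scmp (st s) q i) (id2 is_))
  >>> hcomp (id2 js) (hcomp (star2 (st s) al) (id2 is_))
  >>> hcomp (id2 js) (hcomp (scmp_inv (st s) j p) (id2 is_))
  >>> hcomp (id2 js) (assoc_inv (star (st s) j) (star (st s) p) is_)
  >>> assoc js (star (st s) j) (comp1 (star (st s) p) is_)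
  >>> hcomp (epsA s pj) (id2 (comp1 (star (st s) p) is_))
  >>> lunit (comp1 (star (st s) p) is_).

Definition rho {C D : BicatData} (s : SettingData C D) {a b : ob C} (f : hom a b)
  (pA : smor (SA s) f) (pB : smor (SB s) f)
  (etaAinv : cell (comp1 (star (st s) f) (fmap (shr s) pA)) (id1 (F0 (st s) a)))
  : cell (fmap (shr s) pA) (fmap (psh s) pB) :=
  lunit_inv (fmap (shr s) pA)
  >>> hcomp (etaB s pB) (id2 (fmap (shr s) pA))
  >>> assoc_inv (fmap (psh s) pB) (star (st s) f) (fmap (shr s) pA)
  >>> hcomp (id2 (fmap (psh s) pB)) etaAinv
  >>> runit (fmap (psh s) pB).

(* By the triangle identities, the comparison rho_f : f_! => f_* satisfies
   eps^A_j ; eta^B_j = rho_j j^*   and   i^* rho_i ; eps^B_i = (eta^A_i)^-1.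
   Expanding A_D, rho_i and B_D', the counit eps^A_j (from A_D) meets the unit eta^B_j
   (from B_D') and they fuse into rho_j, which can be slid to the front; i^* rho_i
   followed by eps^B_i becomes (eta^A_i)^-1, cancelling the unit eta^A_i of A_D; and
   alpha^* cancels against (alpha^-1)^* together with the coherence isomorphisms
   of f |-> f^*.  What is left is rho_j q^*.

   Coherence in the strict 2-category D is handled by viewing every cell built from
   associators and unitors as a transported identity: two parallel such cells are
   equal by proof irrelevance, so they can be merged and discarded freely. *)

From Stdlib Require Import ProofIrrelevance Setoid.

Notation "f ◁ x" := (hcomp (id2 f) x) (at level 39, right associativity).
Notation "x ▷ f" := (hcomp x (id2 f)) (at level 38, left associativity).

Definition eq_cell {B : BicatData} {a b} {f g : @hom B a b} (e : f = g) : cell f g :=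
  eq_rect f (fun k => cell f k) (id2 f) g e.

Definition structural {B : BicatData} {a b} {f g : @hom B a b} (x : cell f g) : Prop :=
  exists e : f = g, x = eq_cell e.

Section Bicategory.

Context {B : Bicat}.

Lemma vcompA {a b} {f g h k : @hom B a b} (x : cell f g) (y : cell g h) (z : cell h k) :
  x >>> (y >>> z) = x >>> y >>> z.
Proof. symmetry; apply (vassoc (blaws B)). Qed.

Lemma id2_vcomp {a b} {f g : @hom B a b} (x : cell f g) : id2 f >>> x = x.
Proof. apply (vid_r (blaws B)). Qed.

Lemma vcomp_id2 {a b} {f g : @hom B a b} (x : cell f g) : x >>> id2 g = x.
Proof. apply (vid_l (blaws B)). Qed.

Lemma hcomp_id2 {a b c} (g : @hom B b c) (f : hom a b) : g ◁ id2 f = id2 (comp1 g f).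
Proof. apply (hcomp_id (blaws B)). Qed.

Lemma whiskerL_vcomp {a b c} (h : @hom B b c) {f g k : hom a b} (x : cell f g) (y : cell g k) :
  h ◁ (x >>> y) = h ◁ x >>> h ◁ y.
Proof. rewrite <- (interchange (blaws B)), vcomp_id2. reflexivity. Qed.

Lemma whiskerR_vcomp {a b c} (h : @hom B a b) {f g k : hom b c} (x : cell f g) (y : cell g k) :
  (x >>> y) ▷ h = x ▷ h >>> y ▷ h.
Proof. rewrite <- (interchange (blaws B)), vcomp_id2. reflexivity. Qed.

Lemma whisker_exchange {a b c} {f f' : @hom B b c} {g g' : hom a b} (x : cell f f') (y : cell g g') :
  x ▷ g >>> f' ◁ y = f ◁ y >>> x ▷ g'.
Proof.
  rewrite <- !(interchange (blaws B)), !vcomp_id2, !id2_vcomp. reflexivity.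
Qed.

Lemma whisker_exchange_after {a b c} {f f' : @hom B b c} {g g' : hom a b} (x : cell f f')
  (y : cell g g') {k} (w : cell k (comp1 f g)) :
  w >>> x ▷ g >>> f' ◁ y = w >>> f ◁ y >>> x ▷ g'.
Proof. rewrite <- !vcompA, whisker_exchange. reflexivity. Qed.

Lemma vcomp_cancel {a b} {f g : @hom B a b} {x : cell f g} {y : cell g f} :
  x >>> y = id2 f -> forall k (w : cell k f), w >>> x >>> y = w.
Proof. intros Hxy k w. rewrite <- vcompA, Hxy. apply vcomp_id2. Qed.

Lemma whiskerL_inverse {a b c} (h : @hom B b c) {f g : hom a b} {x : cell f g} {y : cell g f} :
  x >>> y = id2 f -> h ◁ x >>> h ◁ y = id2 (comp1 h f).
Proof. intro Hxy. rewrite <- whiskerL_vcomp, Hxy. apply hcomp_id2. Qed.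

Lemma whiskerR_inverse {a b c} (h : @hom B a b) {f g : hom b c} {x : cell f g} {y : cell g f} :
  x >>> y = id2 f -> x ▷ h >>> y ▷ h = id2 (comp1 f h).
Proof. intro Hxy. rewrite <- whiskerR_vcomp, Hxy. apply hcomp_id2. Qed.

Lemma whiskerR_vcomp_after {a b c} (h : @hom B a b) {f g k : hom b c} (x : cell f g)
  (y : cell g k) {m} (w : cell m (comp1 f h)) :
  w >>> x ▷ h >>> y ▷ h = w >>> (x >>> y) ▷ h.
Proof. rewrite <- vcompA, whiskerR_vcomp. reflexivity. Qed.

Lemma whiskerL_vcomp_after {a b c} (h : @hom B b c) {f g k : hom a b} (x : cell f g)
  (y : cell g k) {m} (w : cell m (comp1 h f)) :
  w >>> h ◁ x >>> h ◁ y = w >>> h ◁ (x >>> y).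
Proof. rewrite <- vcompA, whiskerL_vcomp. reflexivity. Qed.

Section Conjugation.

Context {a b : ob B} {f1 f2 g1 g2 : @hom B a b} {x : cell f1 f2} {y : cell g1 g2}
  {s : cell f1 g1} {s' : cell f2 g2}.
Hypothesis square : x >>> s' = s >>> y.

Lemma conj_by_iso_src (si : cell g1 f1) : si >>> s = id2 g1 -> y = si >>> x >>> s'.
Proof. intro Hs. rewrite <- vcompA, square, vcompA, Hs, id2_vcomp. reflexivity. Qed.

Lemma conj_by_iso_tgt (si' : cell g2 f2) : s' >>> si' = id2 f2 -> x = s >>> y >>> si'.
Proof. intro Hs. rewrite <- square, <- vcompA, Hs, vcomp_id2. reflexivity. Qed.

End Conjugation.

Lemma lunit_conj {a b} {f f' : @hom B a b} (x : cell f f') :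
  x = lunit_inv f >>> id1 b ◁ x >>> lunit f'.
Proof. eapply conj_by_iso_src. apply (lunit_nat (blaws B)). apply (lunit_iso2 (blaws B)). Qed.

Lemma runit_conj {a b} {f f' : @hom B a b} (x : cell f f') :
  x = runit_inv f >>> x ▷ id1 a >>> runit f'.
Proof. eapply conj_by_iso_src. apply (runit_nat (blaws B)). apply (runit_iso2 (blaws B)). Qed.

Lemma whiskerL_id1 {a b} {f f' : @hom B a b} (x : cell f f') :
  id1 b ◁ x = lunit f >>> x >>> lunit_inv f'.
Proof. eapply conj_by_iso_tgt. apply (lunit_nat (blaws B)). apply (lunit_iso1 (blaws B)). Qed.

Lemma whiskerL_whiskerL {a b c d} (h : @hom B c d) (g : hom b c) {f f' : hom a b} (x : cell f f') :
  h ◁ g ◁ x = assoc h g f >>> comp1 h g ◁ x >>> assoc_inv h g f'.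
Proof.
  eapply conj_by_iso_tgt.
  - rewrite <- (hcomp_id2 h g). apply (assoc_nat (blaws B)).
  - apply (assoc_iso1 (blaws B)).
Qed.

Lemma whiskerL_comp1 {a b c d} (h : @hom B c d) (g : hom b c) {f f' : hom a b} (x : cell f f') :
  comp1 h g ◁ x = assoc_inv h g f >>> h ◁ g ◁ x >>> assoc h g f'.
Proof.
  eapply conj_by_iso_src.
  - rewrite <- (hcomp_id2 h g). apply (assoc_nat (blaws B)).
  - apply (assoc_iso2 (blaws B)).
Qed.

Lemma whiskerR_whiskerR {a b c d} {h h' : @hom B c d} (g : hom b c) (f : hom a b) (z : cell h h') :
  z ▷ g ▷ f = assoc_inv h g f >>> z ▷ comp1 g f >>> assoc h' g f.
Proof.
  eapply conj_by_iso_src.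
  - rewrite <- (hcomp_id2 g f). apply (assoc_nat (blaws B)).
  - apply (assoc_iso2 (blaws B)).
Qed.

Lemma whiskerR_whiskerL {a b c d} (h : @hom B c d) {g g' : hom b c} (f : hom a b) (y : cell g g') :
  (h ◁ y) ▷ f = assoc_inv h g f >>> h ◁ y ▷ f >>> assoc h g' f.
Proof.
  eapply conj_by_iso_src. apply (assoc_nat (blaws B)). apply (assoc_iso2 (blaws B)).
Qed.

Lemma assoc_inv_whiskerR {a b c d} {h h' : @hom B c d} (g : hom b c) (f : hom a b)
  (z : cell h h') {m} (w : cell m (comp1 (comp1 h g) f)) :
  w >>> assoc_inv h g f >>> z ▷ comp1 g f = w >>> z ▷ g ▷ f >>> assoc_inv h' g f.
Proof.
  rewrite (whiskerR_whiskerR g f z), <- !vcompA.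
  rewrite (assoc_iso1 (blaws B)), vcomp_id2. reflexivity.
Qed.

Lemma runit_inv_whiskerR {a b} {f f' : @hom B a b} (x : cell f f') :
  runit_inv f >>> x ▷ id1 a = x >>> runit_inv f'.
Proof.
  rewrite (runit_conj x) at 2. rewrite <- !vcompA.
  rewrite (runit_iso1 (blaws B)), vcomp_id2. reflexivity.
Qed.

End Bicategory.

Section StrictBicategory.

Context {B : Bicat} (HB : IsStrict B).

Lemma structural_unique {a b} {f g : @hom B a b} (x y : cell f g) :
  structural x -> structural y -> x = y.
Proof. intros [e1 ->] [e2 ->]. f_equal. apply proof_irrelevance. Qed.

Lemma structural_id2 {a b} (f : @hom B a b) : structural (id2 f).
Proof. exists eq_refl. reflexivity. Qed.

Lemma structural_vcomp {a b} {f g h : @hom B a b} (x : cell f g) (y : cell g h) :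
  structural x -> structural y -> structural (x >>> y).
Proof.
  intros [e1 ->] [e2 ->]. exists (eq_trans e1 e2). destruct e2, e1. apply vcomp_id2.
Qed.

Lemma structural_hcomp {a b c} {g g' : @hom B b c} {f f' : hom a b} (y : cell g g') (x : cell f f') :
  structural y -> structural x -> structural (hcomp y x).
Proof. intros [e1 ->] [e2 ->]. destruct e2, e1. exists eq_refl. apply hcomp_id2. Qed.

Lemma structural_inv {a b} {f g : @hom B a b} (x : cell f g) (y : cell g f) :
  structural x -> x >>> y = id2 f -> structural y.
Proof.
  intros [e ->] H. exists (eq_sym e). destruct e. simpl in *. rewrite id2_vcomp in H. exact H.
Qed.

Lemma structural_assoc {a b c d} (h : @hom B c d) (g : hom b c) (f : hom a b) :
  structural (assoc h g f).
Proof. destruct HB as [H _]. apply H. Qed.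

Lemma structural_lunit {a b} (f : @hom B a b) : structural (lunit f).
Proof. destruct HB as [_ [H _]]. apply H. Qed.

Lemma structural_runit {a b} (f : @hom B a b) : structural (runit f).
Proof. destruct HB as [_ [_ H]]. apply H. Qed.

Lemma structural_assoc_inv {a b c d} (h : @hom B c d) (g : hom b c) (f : hom a b) :
  structural (assoc_inv h g f).
Proof. eapply structural_inv. apply structural_assoc. apply (assoc_iso1 (blaws B)). Qed.

Lemma structural_lunit_inv {a b} (f : @hom B a b) : structural (lunit_inv f).
Proof. eapply structural_inv. apply structural_lunit. apply (lunit_iso1 (blaws B)). Qed.

Lemma structural_runit_inv {a b} (f : @hom B a b) : structural (runit_inv f).
Proof. eapply structural_inv. apply structural_runit. apply (runit_iso1 (blaws B)). Qed.

End StrictBicategory.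

Create HintDb structural discriminated.
#[local] Hint Resolve structural_id2 structural_vcomp structural_hcomp structural_assoc
  structural_lunit structural_runit structural_assoc_inv structural_lunit_inv
  structural_runit_inv : structural.

Lemma structural_endo_r {B : Bicat} {a b} {f g : @hom B a b} (w : cell f g) (s : cell g g) :
  structural s -> w >>> s = w.
Proof.
  intro Hs. rewrite (structural_unique s (id2 g)) by auto with structural.
  apply vcomp_id2.
Qed.

Lemma structural_endo_l {B : Bicat} {a b} {f g : @hom B a b} (s : cell f f) (w : cell f g) :
  structural s -> s >>> w = w.
Proof.
  intro Hs. rewrite (structural_unique s (id2 f)) by auto with structural.
  apply id2_vcomp.
Qed.

Lemma vcomp_congr {B : BicatData} {a b} {f g h : @hom B a b} (x x' : cell f g) (y y' : cell g h) :
  x = x' -> y = y' -> x >>> y = x' >>> y'.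
Proof. intros -> ->. reflexivity. Qed.

Ltac vnorm := repeat rewrite vcompA.

Ltac prove_structural HB := clear -HB; auto 20 with structural.

Ltac check_structural HB s :=
  let H := fresh in assert (H : structural s) by prove_structural HB; clear H.

Ltac merge_structural HB :=
  repeat match goal with
  | |- context [?w >>> ?s1 >>> ?s2] =>
      check_structural HB s1; check_structural HB s2;
      rewrite <- (vcompA w s1 s2)
  end;
  repeat match goal with
  | |- context [@vcomp _ _ _ _ ?g ?g ?s ?w] =>
      rewrite (structural_endo_r w s) by prove_structural HB
  | |- context [@vcomp _ _ _ ?f ?f _ ?w ?s] =>
      rewrite (structural_endo_l s w) by prove_structural HB
  end.

Ltac close_structural HB :=
  repeat (reflexivity || apply vcomp_congr || (apply structural_unique; prove_structural HB)).

Ltac slide_earlier x y := first [rewrite <- (whisker_exchange_after x y)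
                                | rewrite <- (whisker_exchange x y)].

Lemma whiskerR_conj_structural {B : Bicat} {a b c} {f f' : @hom B b c}
  {g g' : hom a b} (x : cell f f') (s : cell g g') (t : cell g' g) :
  structural s -> structural t -> x ▷ g = f ◁ s >>> x ▷ g' >>> f' ◁ t.
Proof.
  intros Hs Ht. rewrite <- whisker_exchange, <- vcompA, <- whiskerL_vcomp.
  rewrite (structural_unique (s >>> t) (id2 g)) by auto with structural.
  rewrite hcomp_id2. symmetry. apply vcomp_id2.
Qed.

Definition rho_cell {B : BicatData} {a b : ob B} {R : hom b a} {L L' : hom a b}
  (etaB : cell (id1 b) (comp1 L' R)) (etaAinv : cell (comp1 R L) (id1 a)) : cell L L' :=
  lunit_inv L >>> etaB ▷ L >>> assoc_inv L' R L >>> L' ◁ etaAinv >>> runit L'.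

Section Comparison.

Context {B : Bicat} (HB : IsStrict B) {a b : ob B} {R : hom b a} {L L' : hom a b}.

Lemma whiskerL_rho_cell (etaB : cell (id1 b) (comp1 L' R)) (epsB : cell (comp1 R L') (id1 a))
  (etaAinv : cell (comp1 R L) (id1 a)) :
  IsAdj R L' etaB epsB -> R ◁ rho_cell etaB etaAinv >>> epsB = etaAinv.
Proof.
  intros [zig _]. unfold rho_cell.
  rewrite !whiskerL_vcomp. vnorm.
  rewrite (whiskerL_whiskerL R L' etaAinv), (runit_conj epsB). vnorm.
  merge_structural HB.
  slide_earlier epsB etaAinv. rewrite (whiskerL_id1 etaAinv). vnorm. merge_structural HB.
  assert (unit_zig : etaAinv = (runit_inv R >>> R ◁ etaB >>> assoc R L' R >>> epsB ▷ R
                                  >>> lunit R) ▷ L >>> etaAinv)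
    by (rewrite zig, hcomp_id2, id2_vcomp; reflexivity).
  rewrite unit_zig at 2. rewrite !whiskerR_vcomp.
  rewrite (whiskerR_whiskerR _ _ epsB), (whiskerR_whiskerL _ _ etaB).
  vnorm. merge_structural HB. close_structural HB.
Qed.

Lemma whiskerL_counit_of_invertible_unit (etaA : cell (id1 a) (comp1 R L))
  (epsA : cell (comp1 L R) (id1 b)) (etaAinv : cell (comp1 R L) (id1 a)) :
  IsAdj L R etaA epsA -> IsInverse etaA etaAinv ->
  R ◁ epsA = assoc R L R >>> etaAinv ▷ R >>> lunit R >>> runit_inv R.
Proof.
  intros [_ zag] [_ inv_r].
  transitivity (assoc R L R >>> etaAinv ▷ R >>> lunit R
                >>> (lunit_inv R >>> etaA ▷ R >>> assoc_inv R L R >>> R ◁ epsA >>> runit R)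
                >>> runit_inv R).
  - vnorm. merge_structural HB.
    rewrite (vcomp_cancel (whiskerR_inverse R inv_r)). merge_structural HB.
    close_structural HB.
  - rewrite zag. vnorm. merge_structural HB. close_structural HB.
Qed.

Lemma rho_cell_whiskerR (etaA : cell (id1 a) (comp1 R L)) (epsA : cell (comp1 L R) (id1 b))
  (etaAinv : cell (comp1 R L) (id1 a)) (etaB : cell (id1 b) (comp1 L' R)) :
  IsAdj L R etaA epsA -> IsInverse etaA etaAinv ->
  epsA >>> etaB = rho_cell etaB etaAinv ▷ R.
Proof.
  intros adjA invA. unfold rho_cell.
  rewrite (runit_conj etaB) at 1. rewrite (lunit_conj epsA). vnorm. merge_structural HB.
  slide_earlier etaB epsA.
  rewrite (whiskerL_comp1 L' R epsA), (whiskerL_counit_of_invertible_unit _ _ _ adjA invA).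
  rewrite !whiskerL_vcomp, !whiskerR_vcomp.
  rewrite (whiskerR_whiskerR _ _ etaB), (whiskerR_whiskerL _ _ etaAinv).
  vnorm. merge_structural HB. close_structural HB.
Qed.

End Comparison.

Section BeckChevalley.

Context {B : Bicat} {X Y Z W : ob B} {Q : hom Z X} {I : hom W Z} {J : hom Y X} {P : hom W Y}.

Definition A_cell {jl : hom X Y} {il : hom Z W} (etaA : cell (id1 Z) (comp1 I il))
  (c : cell (comp1 Q I) (comp1 J P)) (epsA : cell (comp1 jl J) (id1 Y)) :
  cell (comp1 jl Q) (comp1 P il) :=
  runit_inv (comp1 jl Q) >>> comp1 jl Q ◁ etaA >>> assoc_inv jl Q (comp1 I il)
  >>> jl ◁ assoc Q I il >>> jl ◁ c ▷ il >>> jl ◁ assoc_inv J P il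
  >>> assoc jl J (comp1 P il) >>> epsA ▷ comp1 P il >>> lunit (comp1 P il).

Definition B_cell {jr : hom X Y} {ir : hom Z W} (etaB : cell (id1 Y) (comp1 jr J))
  (c : cell (comp1 J P) (comp1 Q I)) (epsB : cell (comp1 I ir) (id1 Z)) :
  cell (comp1 P ir) (comp1 jr Q) :=
  lunit_inv (comp1 P ir) >>> etaB ▷ comp1 P ir >>> assoc_inv jr J (comp1 P ir)
  >>> jr ◁ assoc J P ir >>> jr ◁ c ▷ ir >>> jr ◁ assoc_inv Q I ir
  >>> jr ◁ Q ◁ epsB >>> jr ◁ runit Q.

Lemma A_cell_whiskerL_B_cell (HB : IsStrict B) {jl jr : hom X Y} {il ir : hom Z W}
  (etaA : cell (id1 Z) (comp1 I il)) (etaAinv : cell (comp1 I il) (id1 Z))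
  (c : cell (comp1 Q I) (comp1 J P)) (c' : cell (comp1 J P) (comp1 Q I))
  (epsA : cell (comp1 jl J) (id1 Y)) (etaB : cell (id1 Y) (comp1 jr J))
  (epsB : cell (comp1 I ir) (id1 Z)) (rj : cell jl jr) (ri : cell il ir) :
  etaA >>> etaAinv = id2 _ -> c >>> c' = id2 _ ->
  epsA >>> etaB = rj ▷ J -> I ◁ ri >>> epsB = etaAinv ->
  A_cell etaA c epsA >>> P ◁ ri >>> B_cell etaB c' epsB = rj ▷ Q.
Proof.
  intros invA invc rhoj rhoi. unfold A_cell, B_cell. vnorm.
  (* epsA meets etaB and they fuse into rj, which is then slid to the front. *)
  rewrite (lunit_conj (P ◁ ri)). vnorm. merge_structural HB.
  slide_earlier etaB (P ◁ ri).
  rewrite (whiskerR_vcomp_after _ epsA etaB), rhoj, (whiskerR_whiskerR J).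
  rewrite (whiskerR_conj_structural rj (assoc J P il) (assoc_inv J P il))
    by prove_structural HB.
  vnorm. merge_structural HB.
  slide_earlier rj (c ▷ il).
  rewrite (whiskerR_conj_structural rj (assoc_inv Q I il) (assoc Q I il))
    by prove_structural HB.
  vnorm. merge_structural HB. vnorm.
  rewrite (assoc_inv_whiskerR Q (comp1 I il) rj).
  slide_earlier (rj ▷ Q) etaA.
  rewrite (runit_inv_whiskerR (rj ▷ Q)).
  (* Moving ri past c' lets c cancel c'; then ri meets epsB and gives etaAinv. *)
  rewrite (whiskerL_comp1 jr J (P ◁ ri)), (whiskerL_whiskerL J P ri), !whiskerL_vcomp.
  vnorm. merge_structural HB.
  rewrite (whiskerL_vcomp_after jr (c ▷ il) (comp1 J P ◁ ri)), whisker_exchange, whiskerL_vcomp.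
  vnorm. rewrite (vcomp_cancel (whiskerL_inverse jr (whiskerR_inverse ir invc))).
  rewrite (whiskerL_comp1 Q I ri), !whiskerL_vcomp. vnorm. merge_structural HB.
  rewrite (whiskerL_vcomp_after jr (Q ◁ I ◁ ri) (Q ◁ epsB)), <- (whiskerL_vcomp Q), rhoi.
  rewrite (whiskerL_comp1 jr Q etaA). vnorm. merge_structural HB.
  rewrite (vcomp_cancel (whiskerL_inverse jr (whiskerL_inverse Q invA))).
  merge_structural HB. reflexivity.
Qed.

End BeckChevalley.

Definition star_square {C D : BicatData} (P : CoopPsfunData C D) {a b c d : ob C}
  {f : hom a b} {g : hom b c} {h : hom a d} {k : hom d c}
  (x : cell (comp1 g f) (comp1 k h)) :
  cell (comp1 (star P h) (star P k)) (comp1 (star P f) (star P g)) :=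
  scmp P h k >>> star2 P x >>> scmp_inv P f g.

Lemma star_square_inverse {C : BicatData} {D : Bicat} (P : CoopPsfun C D) {a b c d : ob C}
  {f : hom a b} {g : hom b c} {h : hom a d} {k : hom d c}
  (x : cell (comp1 g f) (comp1 k h)) (y : cell (comp1 k h) (comp1 g f)) :
  y >>> x = id2 _ -> star_square P x >>> star_square P y = id2 _.
Proof.
  intro Hyx. pose proof (cplaws P) as LP. unfold star_square. vnorm.
  rewrite (vcomp_cancel (proj2 (scmp_iso LP _ _ _ f g))).
  rewrite <- (vcompA (scmp P h k) (star2 P x)), <- (star2_comp LP), Hyx, (star2_id LP), vcomp_id2.
  apply (scmp_iso LP).
Qed.

Section SettingCells.

Context {C : BicatData} {D : Bicat} (S : SettingData C D) {X Y Z W : ob C}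
  (j : hom X Y) (q : hom X Z) (i : hom Z W) (p : hom Y W).

Lemma A_D_eq_A_cell (al : cell (comp1 p j) (comp1 i q)) (iA : smor (SA S) i)
  (jA : smor (SA S) j) :
  A_D S j q i p al iA jA = A_cell (etaA S iA) (star_square (st S) al) (epsA S jA).
Proof.
  unfold A_D, A_cell, star_square. rewrite !whiskerR_vcomp, !whiskerL_vcomp. vnorm.
  reflexivity.
Qed.

Lemma B_D_eq_B_cell (al : cell (comp1 i q) (comp1 p j)) (iB : smor (SB S) i)
  (jB : smor (SB S) j) :
  B_D S q j p i al iB jB = B_cell (etaB S jB) (star_square (st S) al) (epsB S iB).
Proof.
  unfold B_D, B_cell, star_square. rewrite !whiskerR_vcomp, !whiskerL_vcomp. vnorm.
  reflexivity.
Qed.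

End SettingCells.

Theorem mainTheorem15 (C D : Bicat) (HC : IsStrict C) (HD : IsStrict D)
  (S : Setting C D)
  (X Y Z W : ob C) (j : hom X Y) (q : hom X Z) (i : hom Z W) (p : hom Y W)
  (al : cell (comp1 p j) (comp1 i q))
  (iA : smor (SA S) i) (iB : smor (SB S) i) (jA : smor (SA S) j) (jB : smor (SB S) j)
  (HepsBi : IsIso (epsB S iB)) (HepsBj : IsIso (epsB S jB))
  (al_inv : cell (comp1 i q) (comp1 p j)) (Hal : IsInverse al al_inv)
  (etaAi_inv : cell (comp1 (star (st S) i) (fmap (shr S) iA)) (id1 (F0 (st S) Z)))
  (HetaAi : IsInverse (etaA S iA) etaAi_inv)
  (etaAj_inv : cell (comp1 (star (st S) j) (fmap (shr S) jA)) (id1 (F0 (st S) X)))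
  (HetaAj : IsInverse (etaA S jA) etaAj_inv) :
  A_D S j q i p al iA jA
  >>> hcomp (id2 (star (st S) p)) (rho S i iA iB etaAi_inv)
  >>> B_D S q j p i al_inv iB jB
  = hcomp (rho S j jA jB etaAj_inv) (id2 (star (st S) q)).
Proof.
  pose proof (slaws S) as LS.
  rewrite A_D_eq_A_cell, B_D_eq_B_cell.
  apply (A_cell_whiskerL_B_cell HD _ etaAi_inv).
  - apply HetaAi.
  - apply star_square_inverse, Hal.
  - exact (rho_cell_whiskerR HD _ _ _ _ (adjA LS _ _ _ jA) HetaAj).
  - exact (whiskerL_rho_cell HD _ _ _ (adjB LS _ _ _ iB)).
Qed.
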